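(* For every compact metric space $X$ there is a sentence $\varphi$ of $L_{\omega_1,\omega}$ in the metric signature such that for every Polish metric space $Y$, $Y\models\varphi$ if and only if $Y$ is isometric to $X$.
   Context: A metric space $(X,d)$ is viewed as a first-order structure in the signature $\{R_q : q\in\mathbb{Q}^+\}$ of binary relation symbols, where $R_q(x,y)$ holds iff $d(x,y)<q$. $L_{\omega_1,\omega}$ is the infinitary logic allowing countable conjunctions and disjunctions and finite quantifier strings. *)

From Stdlib Require Import Reals QArith List.
Open Scope R_scope.

Record MetricSpace := {
  carrier :> Type;
  dist : carrier -> carrier -> R;
  dist_nonneg : forall x y, 0 <= dist x y;
  dist_eq0 : forall x y, dist x y = 0 <-> x = y;
  dist_sym : forall x y, dist x y = dist y x;
  dist_tri : forall x y z, dist x z <= dist x y + dist y z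
}.

Definition is_open {X : MetricSpace} (U : X -> Prop) : Prop :=
  forall x, U x -> exists eps, eps > 0 /\ forall y, dist X x y < eps -> U y.

Definition compact_space (X : MetricSpace) : Prop :=
  forall (I : Type) (U : I -> X -> Prop),
    (forall i, is_open (U i)) ->
    (forall x, exists i, U i x) ->
    exists l : list I, forall x, exists i, In i l /\ U i x.

Definition cauchy {X : MetricSpace} (s : nat -> X) : Prop :=
  forall eps, eps > 0 -> exists N, forall m n, (m >= N)%nat -> (n >= N)%nat ->
    dist X (s m) (s n) < eps.

Definition converges_to {X : MetricSpace} (s : nat -> X) (x : X) : Prop :=
  forall eps, eps > 0 -> exists N, forall n, (n >= N)%nat -> dist X (s n) x < eps.

Definition complete_space (X : MetricSpace) : Prop :=
  forall s : nat -> X, cauchy s -> exists x, converges_to s x.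

(** Separable: has a countable dense subset (possibly empty, for the empty space). *)
Definition separable (X : MetricSpace) : Prop :=
  exists D : nat -> option X,
    forall (x : X) eps, eps > 0 -> exists n y, D n = Some y /\ dist X x y < eps.

Definition polish (X : MetricSpace) : Prop := complete_space X /\ separable X.

Definition isometric (X Y : MetricSpace) : Prop :=
  exists f : X -> Y,
    (forall a b, dist Y (f a) (f b) = dist X a b) /\
    (forall y, exists x, f x = y).

Definition Qpos := { q : Q | (0 < q)%Q }.

Inductive formula : Type :=
  | FEq : nat -> nat -> formula
  | FRel : Qpos -> nat -> nat -> formula
  | FNot : formula -> formula
  | FAnd : (nat -> formula) -> formula
  | FOr : (nat -> formula) -> formula
  | FExists : nat -> formula -> formula
  | FForall : nat -> formula -> formula.

Fixpoint free (v : nat) (phi : formula) : Prop :=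
  match phi with
  | FEq i j => v = i \/ v = j
  | FRel _ i j => v = i \/ v = j
  | FNot p => free v p
  | FAnd f => exists n, free v (f n)
  | FOr f => exists n, free v (f n)
  | FExists w p => v <> w /\ free v p
  | FForall w p => v <> w /\ free v p
  end.

(** A sentence has no free variables (then every subformula automatically
    has only finitely many free variables, as quantifier strings are finite). *)
Definition sentence (phi : formula) : Prop := forall v, ~ free v phi.

(** Assignments are partial ([None] = unassigned), so that the empty
    metric space is handled correctly; a sentence is evaluated in the
    empty assignment. *)
Definition update {X : Type} (s : nat -> option X) (v : nat) (a : X) : nat -> option X :=
  fun w => if Nat.eqb w v then Some a else s w.

Fixpoint sat (X : MetricSpace) (s : nat -> option X) (phi : formula) : Prop :=
  match phi with
  | FEq i j => match s i, s j with Some a, Some b => a = b | _, _ => False end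
  | FRel q i j => match s i, s j with
                  | Some a, Some b => dist X a b < Q2R (proj1_sig q)
                  | _, _ => False end
  | FNot p => ~ sat X s p
  | FAnd f => forall n, sat X s (f n)
  | FOr f => exists n, sat X s (f n)
  | FExists w p => exists a : X, sat X (update s w a) p
  | FForall w p => forall a : X, sat X (update s w a) p
  end.

Definition models (Y : MetricSpace) (phi : formula) : Prop :=
  sat Y (fun _ => None) phi.

(** If [X] is
    empty, [forall x, x <> x] does it.  Otherwise fix a dense sequence [d] of
    [X]; the sentence is the conjunction, over all [n] and tolerances
    [eps k = 1/(k+1)], of
    (A) every [n]-tuple of the model has, up to [eps k], the distance matrix
        of some [n]-tuple of [d]-points, and
    (B) every [n]-tuple of [d]-points is realised in the model up to [eps k].
    Conversely, if a Polish [Y] satisfies (A) and (B), a diagonal cluster-point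
    argument in the compact [X] turns (A) into an isometric embedding of a
    dense sequence of [Y], hence of [Y], into [X]; it is onto because (A) and
    (B) transfer separated families both ways, so maximal separated families
    of [Y] would otherwise grow. *)

From Stdlib Require Import Reals QArith List Lia Lra Classical ClassicalEpsilon
  FunctionalExtensionality Cantor.
Open Scope R_scope.

Definition upd {A : Type} (f : nat -> A) (k : nat) (a : A) : nat -> A :=
  fun i => if Nat.eqb i k then a else f i.

Definition prefix {A : Type} (n : nat) (f : nat -> A) (z : A) : nat -> A :=
  fun i => if Nat.ltb i n then f i else z.

Lemma prefix_lt {A : Type} n (f : nat -> A) z i : (i < n)%nat -> prefix n f z i = f i.
Proof. intros Hi. unfold prefix. apply Nat.ltb_lt in Hi. now rewrite Hi. Qed.

Lemma prefix_upd {A : Type} n (f : nat -> A) z a :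
  upd (prefix n f z) n a = prefix (S n) (upd f n a) z.
Proof.
  apply functional_extensionality; intros w. unfold upd, prefix.
  destruct (Nat.eqb_spec w n) as [->|Hne].
  - now rewrite (proj2 (Nat.ltb_lt n (S n))) by lia.
  - destruct (Nat.ltb_spec w n), (Nat.ltb_spec w (S n)); auto; lia.
Qed.

Lemma prefix_S {A : Type} n (f : nat -> A) z : prefix (S n) f z = upd (prefix n f z) n (f n).
Proof.
  rewrite prefix_upd. f_equal. apply functional_extensionality; intros w.
  unfold upd. now destruct (Nat.eqb_spec w n) as [->|].
Qed.

Definition env {Y : Type} (n : nat) (t : nat -> Y) : nat -> option Y :=
  prefix n (fun i => Some (t i)) None.

Lemma env_lt {Y : Type} n (t : nat -> Y) i : (i < n)%nat -> env n t i = Some (t i).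
Proof. exact (prefix_lt n _ None i). Qed.

Lemma env_upd {Y : Type} n (t : nat -> Y) a :
  update (env n t) n a = env (S n) (upd t n a).
Proof.
  change (upd (env n t) n (Some a) = env (S n) (upd t n a)).
  unfold env. rewrite prefix_upd. f_equal.
  apply functional_extensionality; intros w. unfold upd. now destruct (Nat.eqb w n).
Qed.

Lemma env_S {Y : Type} n (t : nat -> Y) : env (S n) t = update (env n t) n (t n).
Proof. exact (prefix_S n (fun i => Some (t i)) None). Qed.

(** Besides the atomic [R_q], we need "d(x_i,x_j) < c" for real [c] (a
    countable disjunction over the rationals below [c]), two-sided distance
    bounds, blocks of [n] quantifiers, and conjunctions/disjunctions indexed
    by [n]-tuples of naturals (countable, since only the first [n] entries
    of the index function matter). *)

Definition FFalse : formula :=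
  FExists 0 (FAnd (fun n => match n with O => FEq 0 0 | _ => FNot (FEq 0 0) end)).
Definition FTrue : formula := FNot FFalse.

Lemma sat_FFalse (Y : MetricSpace) s : ~ sat Y s FFalse.
Proof. intros [a Ha]. exact (Ha 1%nat (Ha 0%nat)). Qed.

Lemma sat_FTrue (Y : MetricSpace) s : sat Y s FTrue.
Proof. apply sat_FFalse. Qed.

Lemma free_FFalse v : ~ free v FFalse.
Proof. intros [Hv [n Hn]]. destruct n; simpl in Hn; tauto. Qed.

Lemma free_FTrue v : ~ free v FTrue.
Proof. apply free_FFalse. Qed.

(** The positive rational [(p+1)/(q+1)]; these enumerate [Q+]. *)
Lemma qfrac_pos (p q : nat) : (0 < Qmake (Z.of_nat (S p)) (Pos.of_succ_nat q))%Q.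
Proof. unfold Qlt; simpl. lia. Qed.

Definition qfrac (p q : nat) : Qpos := exist _ _ (qfrac_pos p q).

Lemma qfrac_val p q : Q2R (proj1_sig (qfrac p q)) = INR (S p) / INR (S q).
Proof.
  unfold Q2R; cbn [proj1_sig qfrac Qnum Qden]. unfold Rdiv.
  now rewrite !INR_IZR_INZ, Znat.Zpos_P_of_succ_nat, !Znat.Nat2Z.inj_succ.
Qed.

Lemma qfrac_between (u c : R) : 0 <= u -> u < c ->
  exists p q : nat, u < INR (S p) / INR (S q) < c.
Proof.
  intros Hu Huc.
  destruct (archimed_cor1 (c - u)) as [[|q] [Hq1 Hq0]]; [lra|lia|].
  assert (Hq : 0 < INR (S q)) by (apply lt_0_INR; lia).
  destruct (archimed (u * INR (S q))) as [Hz1 Hz2].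
  set (z := up (u * INR (S q))) in *.
  assert (Hz : (0 < z)%Z) by (apply lt_IZR; nra).
  exists (Z.to_nat (z - 1)), q.
  replace (INR (S (Z.to_nat (z - 1)))) with (IZR z)
    by (rewrite INR_IZR_INZ; f_equal; lia).
  assert (Hc : (c - u) * INR (S q) > 1).
  { apply (Rmult_lt_compat_r (INR (S q))) in Hq1; [|exact Hq].
    now rewrite Rinv_l in Hq1 by lra. }
  split; apply (Rmult_lt_reg_r (INR (S q))); auto; unfold Rdiv;
    rewrite Rmult_assoc, Rinv_l by lra; nra.
Qed.

Definition DistLt (i j : nat) (c : R) : formula :=
  FOr (fun p => FOr (fun q =>
    if Rlt_dec (Q2R (proj1_sig (qfrac p q))) c then FRel (qfrac p q) i j else FFalse)).

Lemma sat_DistLt (Y : MetricSpace) s i j a b c :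
  s i = Some a -> s j = Some b -> (sat Y s (DistLt i j c) <-> dist Y a b < c).
Proof.
  intros Hi Hj. unfold DistLt; cbn [sat]. split.
  - intros [p [q H]]. destruct (Rlt_dec _ c).
    + cbn [sat] in H. rewrite Hi, Hj in H. lra.
    + exact (False_ind _ (sat_FFalse _ _ H)).
  - intros H. destruct (qfrac_between (dist Y a b) c) as [p [q Hpq]];
      [apply dist_nonneg|exact H|].
    exists p, q. rewrite qfrac_val. destruct (Rlt_dec _ c); [|lra].
    cbn [sat]. rewrite Hi, Hj, qfrac_val. lra.
Qed.

Lemma free_DistLt v i j c : free v (DistLt i j c) -> v = i \/ v = j.
Proof.
  intros [p [q H]]. destruct (Rlt_dec _ c); [exact H|].
  exact (False_ind _ (free_FFalse _ H)).
Qed.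

(** [a] is within [e] of [r], with the bounds as expressed by [DistNear]. *)
Definition close (a r e : R) : Prop := r - e <= a < r + e.

Definition DistNear (i j : nat) (r e : R) : formula :=
  FAnd (fun b => match b with O => DistLt i j (r + e) | _ => FNot (DistLt i j (r - e)) end).

Lemma sat_DistNear (Y : MetricSpace) s i j a b r e :
  s i = Some a -> s j = Some b -> (sat Y s (DistNear i j r e) <-> close (dist Y a b) r e).
Proof.
  intros Hi Hj. unfold close, DistNear. cbn [sat].
  pose proof (sat_DistLt Y s i j a b (r + e) Hi Hj) as Hhi.
  pose proof (sat_DistLt Y s i j a b (r - e) Hi Hj) as Hlo.
  split.
  - intros H. pose proof (H 0%nat) as H0. pose proof (H 1%nat) as H1. cbn [sat] in H0, H1.
    rewrite Hhi in H0. rewrite Hlo in H1. lra.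
  - intros [H1 H2] [|n]; cbn [sat]; [tauto|]. intros H. apply Hlo in H. lra.
Qed.

Lemma free_DistNear v i j r e : free v (DistNear i j r e) -> v = i \/ v = j.
Proof. intros [[|n] H]; exact (free_DistLt _ _ _ _ H). Qed.

Definition fits (Y : MetricSpace) (n : nat) (t : nat -> Y) (dm : nat -> nat -> R) (e : R) :=
  forall i j, (i < n)%nat -> (j < n)%nat -> close (dist Y (t i) (t j)) (dm i j) e.

Definition Fits (n : nat) (dm : nat -> nat -> R) (e : R) : formula :=
  FAnd (fun i => FAnd (fun j =>
    if andb (Nat.ltb i n) (Nat.ltb j n) then DistNear i j (dm i j) e else FTrue)).

Lemma sat_Fits (Y : MetricSpace) n t dm e :
  sat Y (env n t) (Fits n dm e) <-> fits Y n t dm e.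
Proof.
  unfold Fits, fits; cbn [sat]. split.
  - intros H i j Hi Hj. specialize (H i j).
    rewrite (proj2 (Nat.ltb_lt _ _) Hi), (proj2 (Nat.ltb_lt _ _) Hj) in H. cbn [andb] in H.
    now rewrite (sat_DistNear _ _ _ _ _ _ _ _ (env_lt n t i Hi) (env_lt n t j Hj)) in H.
  - intros H i j. destruct (Nat.ltb_spec i n), (Nat.ltb_spec j n); cbn [andb]; try apply sat_FTrue.
    rewrite (sat_DistNear _ _ _ _ _ _ _ _ (env_lt n t i H0) (env_lt n t j H1)). now apply H.
Qed.

Lemma free_Fits v n dm e : free v (Fits n dm e) -> (v < n)%nat.
Proof.
  intros [i [j Hfree]]. revert Hfree.
  destruct (Nat.ltb_spec i n), (Nat.ltb_spec j n); cbn [andb]; intros Hfree;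
    try exact (False_ind _ (free_FTrue _ Hfree)).
  apply free_DistNear in Hfree. lia.
Qed.

Fixpoint ForallN (n : nat) (p : formula) : formula :=
  match n with O => p | S n => ForallN n (FForall n p) end.
Fixpoint ExistsN (n : nat) (p : formula) : formula :=
  match n with O => p | S n => ExistsN n (FExists n p) end.

(** A quantifier block evaluated in the empty assignment ranges over
    [n]-tuples; a point [y0] is needed to pad the tuples when [n = 0]. *)
Lemma sat_ForallN (Y : MetricSpace) (y0 : Y) n p :
  sat Y (fun _ => None) (ForallN n p) <-> forall t : nat -> Y, sat Y (env n t) p.
Proof.
  revert p. induction n as [|n IH]; intros p; cbn [ForallN].
  - split; [intros H t; exact H|intros H; exact (H (fun _ => y0))].
  - rewrite IH. cbn [sat]. split.
    + intros H t. rewrite env_S. apply H.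
    + intros H t a. rewrite env_upd. apply H.
Qed.

Lemma sat_ExistsN (Y : MetricSpace) (y0 : Y) n p :
  sat Y (fun _ => None) (ExistsN n p) <-> exists t : nat -> Y, sat Y (env n t) p.
Proof.
  revert p. induction n as [|n IH]; intros p; cbn [ExistsN].
  - split; [intros H; now exists (fun _ => y0)|intros [t H]; exact H].
  - rewrite IH. cbn [sat]. split.
    + intros [t [a H]]. rewrite env_upd in H. eauto.
    + intros [t H]. exists t, (t n). now rewrite <- env_S.
Qed.

Lemma free_ForallN v n p : free v (ForallN n p) -> (n <= v)%nat /\ free v p.
Proof.
  revert p. induction n as [|n IH]; intros p H; [split; [lia|exact H]|].
  destruct (IH _ H) as [Hn [Hv Hp]]. split; [lia|exact Hp].
Qed.

Lemma free_ExistsN v n p : free v (ExistsN n p) -> (n <= v)%nat /\ free v p.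
Proof.
  revert p. induction n as [|n IH]; intros p H; [split; [lia|exact H]|].
  destruct (IH _ H) as [Hn [Hv Hp]]. split; [lia|exact Hp].
Qed.

(** Disjunction and conjunction over all [n]-tuples [m] of naturals
    (represented by [prefix n m 0]). *)
Fixpoint OrN (n : nat) (F : (nat -> nat) -> formula) : formula :=
  match n with
  | O => F (fun _ => O)
  | S n => FOr (fun a => OrN n (fun m => F (upd m n a)))
  end.
Fixpoint AndN (n : nat) (F : (nat -> nat) -> formula) : formula :=
  match n with
  | O => F (fun _ => O)
  | S n => FAnd (fun a => AndN n (fun m => F (upd m n a)))
  end.

Lemma sat_OrN (Y : MetricSpace) s n F :
  sat Y s (OrN n F) <-> exists m, sat Y s (F (prefix n m O)).
Proof.
  revert F. induction n as [|n IH]; intros F; cbn [OrN sat].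
  - split; [intros H; now exists (fun _ => O)|intros [m H]; exact H].
  - split.
    + intros [a H]. rewrite IH in H. destruct H as [m H]. rewrite prefix_upd in H. eauto.
    + intros [m H]. exists (m n). rewrite IH. exists m. now rewrite <- prefix_S.
Qed.

Lemma sat_AndN (Y : MetricSpace) s n F :
  sat Y s (AndN n F) <-> forall m, sat Y s (F (prefix n m O)).
Proof.
  revert F. induction n as [|n IH]; intros F; cbn [AndN sat].
  - split; [intros H m; exact H|intros H; exact (H (fun _ => O))].
  - split.
    + intros H m. specialize (H (m n)). rewrite IH in H. rewrite prefix_S. apply H.
    + intros H a. rewrite IH. intros m. rewrite prefix_upd. apply H.
Qed.

Lemma free_OrN v n F : free v (OrN n F) -> exists m, free v (F m).
Proof.
  revert F. induction n as [|n IH]; intros F H; [eauto|].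
  destruct H as [a H]. destruct (IH _ H) as [m Hm]. eauto.
Qed.

Lemma free_AndN v n F : free v (AndN n F) -> exists m, free v (F m).
Proof.
  revert F. induction n as [|n IH]; intros F H; [eauto|].
  destruct H as [a H]. destruct (IH _ H) as [m Hm]. eauto.
Qed.

Lemma dist_self (X : MetricSpace) (x : X) : dist X x x = 0.
Proof. now apply dist_eq0. Qed.

Lemma dist_tri4 (X : MetricSpace) (a b c e : X) :
  dist X a e <= dist X a b + dist X b c + dist X c e.
Proof. pose proof (dist_tri X a b e). pose proof (dist_tri X b c e). lra. Qed.

Lemma eq_of_approx (a b : R) :
  (forall r, r > 0 -> a <= b + r) -> (forall r, r > 0 -> b <= a + r) -> a = b.
Proof.
  intros H1 H2. destruct (Rtotal_order a b) as [H|[H|H]]; auto.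
  - specialize (H2 ((b - a) / 2) ltac:(lra)). lra.
  - specialize (H1 ((a - b) / 2) ltac:(lra)). lra.
Qed.

Definition eps (k : nat) : R := / INR (S k).

Lemma eps_pos k : eps k > 0.
Proof. apply Rinv_0_lt_compat, lt_0_INR. lia. Qed.

Lemma eps_small r : r > 0 -> exists k, eps k < r.
Proof.
  intros Hr. destruct (archimed_cor1 r Hr) as [[|k] [Hk Hk0]]; [lia|]. now exists k.
Qed.

Lemma eps_mono n k : (k <= n)%nat -> eps n <= eps k.
Proof. intros H. apply Rinv_le_contravar; [apply lt_0_INR; lia|apply le_INR; lia]. Qed.

Lemma list_min {A : Type} (f : A -> R) (l : list A) :
  (forall a, In a l -> f a > 0) -> exists e, e > 0 /\ forall a, In a l -> e <= f a.
Proof.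
  induction l as [|x l IH]; intros H.
  - exists 1. split; [lra|]. intros a [].
  - destruct IH as [e [He1 He2]]; [intros a Ha; apply H; now right|].
    exists (Rmin e (f x)). split.
    + apply Rmin_glb_lt; auto. apply H. now left.
    + intros a [<-|Ha]; [apply Rmin_r|].
      pose proof (He2 a Ha). pose proof (Rmin_l e (f x)). lra.
Qed.

Lemma list_max {A : Type} (f : A -> nat) (l : list A) :
  exists N, forall a, In a l -> (f a <= N)%nat.
Proof.
  induction l as [|x l [N HN]]; [exists O; intros a []|].
  exists (Nat.max N (f x)). intros a [<-|Ha]; [lia|]. pose proof (HN a Ha). lia.
Qed.

Lemma pigeonhole p B (f : nat -> nat) :
  (forall i, (i < p)%nat -> (f i < B)%nat) ->
  (forall i j, (i < p)%nat -> (j < p)%nat -> f i = f j -> i = j) -> (p <= B)%nat.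
Proof.
  intros Hrange Hinj.
  assert (Hnd : NoDup (map f (seq 0 p))).
  { apply NoDup_map_NoDup_ForallPairs; [|apply seq_NoDup].
    intros a b Ha Hb. apply in_seq in Ha, Hb. apply Hinj; lia. }
  assert (Hincl : incl (map f (seq 0 p)) (seq 0 B)).
  { intros y Hy. apply in_map_iff in Hy. destruct Hy as [x [<- Hx]].
    apply in_seq in Hx. apply in_seq. specialize (Hrange x ltac:(lia)). lia. }
  pose proof (NoDup_incl_length Hnd Hincl) as Hlen.
  now rewrite length_map, !length_seq in Hlen.
Qed.

Lemma nat_max (P : nat -> Prop) B : P O -> (forall p, P p -> (p <= B)%nat) ->
  exists M, P M /\ forall p, P p -> (p <= M)%nat.
Proof.
  revert P. induction B as [|B IH]; intros P H0 HB.
  - exists O. split; auto.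
  - destruct (classic (P (S B))) as [HS|HS]; [now exists (S B)|].
    apply IH; auto. intros p Hp. specialize (HB p Hp).
    destruct (Nat.eq_dec p (S B)); [subst; contradiction|lia].
Qed.

Lemma ball_open (X : MetricSpace) (c : X) r : is_open (fun y => dist X c y < r).
Proof.
  intros x Hx. exists (r - dist X c x). split; [lra|].
  intros y Hy. pose proof (dist_tri X c x y). lra.
Qed.

Lemma finite_net (X : MetricSpace) (HX : compact_space X) r : r > 0 ->
  exists l : list X, forall x, exists c, In c l /\ dist X c x < r.
Proof.
  intros Hr. apply (HX X (fun c y => dist X c y < r)); [intros c; apply ball_open|].
  intros x. exists x. rewrite dist_self. lra.
Qed.

Definition dense_seq (X : MetricSpace) (d : nat -> X) : Prop :=
  forall x r, r > 0 -> exists n, dist X x (d n) < r.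

(** A nonempty compact space has a dense sequence: enumerate finite
    [1/(k+1)]-nets for all [k]. *)
Lemma compact_dense_seq (X : MetricSpace) (HX : compact_space X) (x0 : X) :
  exists d : nat -> X, dense_seq X d.
Proof.
  destruct (choice (fun k l => forall x, exists c, In c l /\ dist X c x < eps k)
              (fun k => finite_net X HX (eps k) (eps_pos k))) as [L HL].
  exists (fun n => let (k, i) := Cantor.of_nat n in nth i (L k) x0).
  intros x r Hr. destruct (eps_small r Hr) as [k Hk].
  destruct (HL k x) as [c [Hc Hd]]. destruct (In_nth _ _ x0 Hc) as [i [_ Hi]].
  exists (Cantor.to_nat (k, i)). rewrite Cantor.cancel_of_to, Hi, dist_sym. lra.
Qed.

Lemma separable_dense_seq (Y : MetricSpace) (y0 : Y) :
  separable Y -> exists e : nat -> Y, dense_seq Y e.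
Proof.
  intros [D HD]. exists (fun n => match D n with Some y => y | None => y0 end).
  intros y r Hr. destruct (HD y r Hr) as [n [z [Hz Hyz]]]. exists n. now rewrite Hz.
Qed.

Definition separated (X : MetricSpace) (r : R) (p : nat) (t : nat -> X) : Prop :=
  forall i j, (i < p)%nat -> (j < p)%nat -> i <> j -> dist X (t i) (t j) > r.

Lemma separated_slack (X : MetricSpace) r p t :
  separated X r p t -> exists h, h > 0 /\ separated X (r + h) p t.
Proof.
  intros Hsep.
  set (gap := fun ij : nat * nat =>
    if Nat.eqb (fst ij) (snd ij) then 1 else dist X (t (fst ij)) (t (snd ij)) - r).
  destruct (list_min gap (list_prod (seq 0 p) (seq 0 p))) as [m [Hm Hmin]].
  { intros [i j] Hin. apply in_prod_iff in Hin. destruct Hin as [Hi Hj].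
    apply in_seq in Hi, Hj. unfold gap; simpl. destruct (Nat.eqb_spec i j); [lra|].
    specialize (Hsep i j ltac:(lia) ltac:(lia) n). lra. }
  exists (m / 2). split; [lra|]. intros i j Hi Hj Hij.
  assert (Hin : In (i, j) (list_prod (seq 0 p) (seq 0 p))).
  { apply in_prod_iff. split; apply in_seq; lia. }
  specialize (Hmin _ Hin). unfold gap in Hmin; simpl in Hmin.
  apply Nat.eqb_neq in Hij. rewrite Hij in Hmin. lra.
Qed.

(** In a compact space, [r]-separated families have bounded size: each
    point lies within [r/2] of a point of a finite net, injectively. *)
Lemma separated_bound (X : MetricSpace) (HX : compact_space X) r : r > 0 ->
  exists B, forall p t, separated X r p t -> (p <= B)%nat.
Proof.
  intros Hr. destruct (finite_net X HX (r / 2) ltac:(lra)) as [l Hl].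
  exists (length l). intros p t Hsep.
  assert (Hidx : forall i, exists idx,
             (idx < length l)%nat /\ dist X (nth idx l (t O)) (t i) < r / 2).
  { intros i. destruct (Hl (t i)) as [c [Hc Hct]].
    destruct (In_nth _ _ (t O) Hc) as [idx [Hidx <-]]. eauto. }
  destruct (choice _ Hidx) as [f Hf].
  apply (pigeonhole p (length l) f); [intros i _; apply Hf|].
  intros i j Hi Hj Hfij. destruct (Nat.eq_dec i j) as [|Hij]; [assumption|exfalso].
  specialize (Hsep i j Hi Hj Hij). destruct (Hf i) as [_ Hfi], (Hf j) as [_ Hfj].
  rewrite Hfij in Hfi. rewrite dist_sym in Hfi.
  pose proof (dist_tri X (t i) (nth (f j) l (t O)) (t j)). lra.
Qed.

(** In a compact space a cluster prefix can always be extended by one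
    coordinate, so a diagonal construction yields an [x] all of whose
    prefixes are cluster points. *)
Definition cluster_prefix (X : MetricSpace) (t : nat -> nat -> X) (k : nat) (x : nat -> X) :=
  forall e, e > 0 -> forall N, exists n, (n >= N)%nat /\
    forall i, (i < k)%nat -> dist X (t n i) (x i) < e.

Lemma cluster_prefix_0 X t x : cluster_prefix X t 0 x.
Proof. intros e He N. exists N. split; [lia|]. intros i Hi; lia. Qed.

Lemma cluster_prefix_ext X t k x y :
  (forall i, (i < k)%nat -> x i = y i) -> cluster_prefix X t k x -> cluster_prefix X t k y.
Proof.
  intros Hxy Hx e He N. destruct (Hx e He N) as [n [Hn Hclose]].
  exists n. split; [exact Hn|]. intros i Hi. rewrite <- Hxy by exact Hi. auto.
Qed.

(** If no extension [a] worked, each [a] would be excluded by a ball of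
    radius [E a] from some index on; finitely many such balls cover [X],
    which contradicts [x] being a cluster prefix. *)
Lemma cluster_prefix_extend (X : MetricSpace) (HX : compact_space X) t k x :
  cluster_prefix X t k x -> exists a, cluster_prefix X t (S k) (upd x k a).
Proof.
  intros Hx. apply NNPP. intros Hnone.
  assert (Hbad : forall a, exists eN : R * nat, fst eN > 0 /\
             forall n, (n >= snd eN)%nat ->
               ~ forall i, (i < S k)%nat -> dist X (t n i) (upd x k a i) < fst eN).
  { intros a. apply NNPP. intros Hgood. apply Hnone. exists a. intros e He N.
    apply NNPP. intros Hno. apply Hgood. exists (e, N). split; [exact He|].
    intros n Hn Hall. apply Hno. eauto. }
  destruct (choice _ Hbad) as [EN HEN].
  destruct (HX X (fun a y => dist X a y < fst (EN a))) as [l Hl].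
  - intros a. apply ball_open.
  - intros y. exists y. rewrite dist_self. apply HEN.
  - destruct (list_min (fun a => fst (EN a)) l) as [e0 [He0 He0l]]; [intros a _; apply HEN|].
    destruct (list_max (fun a => snd (EN a)) l) as [N0 HN0].
    destruct (Hx e0 He0 N0) as [n [Hn Hclose]].
    destruct (Hl (t n k)) as [a [Ha Hball]].
    apply (proj2 (HEN a) n); [pose proof (HN0 a Ha); lia|].
    intros i Hi. unfold upd. destruct (Nat.eqb_spec i k) as [->|Hik].
    + now rewrite dist_sym.
    + pose proof (Hclose i ltac:(lia)). pose proof (He0l a Ha). lra.
Qed.

Section DiagonalLimit.
Variables (X : MetricSpace) (t : nat -> nat -> X).
Hypothesis HX : compact_space X.

Fixpoint partial_limit (k : nat) : nat -> X :=
  match k with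
  | O => fun _ => t O O
  | S k => upd (partial_limit k) k
      (epsilon (inhabits (t O O))
         (fun a => cluster_prefix X t (S k) (upd (partial_limit k) k a)))
  end.

Lemma partial_limit_cluster k : cluster_prefix X t k (partial_limit k).
Proof.
  induction k as [|k IH]; [apply cluster_prefix_0|].
  exact (epsilon_spec _ _ (cluster_prefix_extend X HX t k _ IH)).
Qed.

Lemma partial_limit_stable k i : (i < k)%nat -> partial_limit k i = partial_limit (S i) i.
Proof.
  induction k as [|k IH]; intros Hi; [lia|].
  destruct (Nat.eq_dec i k) as [->|Hik]; [reflexivity|].
  rewrite <- IH by lia. cbn [partial_limit]. unfold upd at 1.
  now rewrite (proj2 (Nat.eqb_neq i k) Hik).
Qed.

Lemma tuple_cluster : exists x : nat -> X, forall k, cluster_prefix X t k x.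
Proof.
  exists (fun i => partial_limit (S i) i). intros k.
  apply (cluster_prefix_ext X t k (partial_limit k)); [|apply partial_limit_cluster].
  exact (partial_limit_stable k).
Qed.

End DiagonalLimit.

Lemma sequence_cluster (X : MetricSpace) (HX : compact_space X) (s : nat -> X) :
  exists c, forall e, e > 0 -> forall N, exists n, (n >= N)%nat /\ dist X (s n) c < e.
Proof.
  destruct (tuple_cluster X (fun n _ => s n) HX) as [x Hx].
  exists (x O). intros e He N. destruct (Hx 1%nat e He N) as [n [Hn Hclose]].
  exists n. split; [exact Hn|]. apply Hclose. lia.
Qed.

(** An isometry from a dense sequence of [Y] into a compact [X] extends to
    every point of [Y]: the image of [y] is a cluster point of the images
    of terms of the sequence converging to [y]. *)
Lemma isometry_extends_point (X Y : MetricSpace) (HX : compact_space X)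
    (e : nat -> Y) (He : dense_seq Y e) (x : nat -> X) :
  (forall i j, dist X (x i) (x j) = dist Y (e i) (e j)) ->
  forall y, exists c, forall m, dist X c (x m) = dist Y y (e m).
Proof.
  intros Hiso y.
  destruct (choice (fun k j => dist Y y (e j) < eps k) (fun k => He y (eps k) (eps_pos k)))
    as [js Hjs].
  destruct (sequence_cluster X HX (fun k => x (js k))) as [c Hc].
  exists c. intros m.
  assert (Hnear : forall r, r > 0 -> exists n,
             dist X (x (js n)) c < r /\ dist Y y (e (js n)) < r).
  { intros r Hr. destruct (eps_small r Hr) as [k Hk].
    destruct (Hc r Hr k) as [n [Hn Hxc]]. exists n. split; [exact Hxc|].
    pose proof (eps_mono n k Hn). pose proof (Hjs n). lra. }
  apply eq_of_approx; intros r Hr; destruct (Hnear (r / 2) ltac:(lra)) as [n [H1 H2]];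
    pose proof (Hiso (js n) m);
    pose proof (dist_sym X c (x (js n))); pose proof (dist_sym Y y (e (js n))).
  - pose proof (dist_tri X c (x (js n)) (x m)). pose proof (dist_tri Y (e (js n)) y (e m)). lra.
  - pose proof (dist_tri X (x (js n)) c (x m)). pose proof (dist_tri Y y (e (js n)) (e m)). lra.
Qed.

Lemma isometry_extends (X Y : MetricSpace) (HX : compact_space X)
    (e : nat -> Y) (He : dense_seq Y e) (x : nat -> X) :
  (forall i j, dist X (x i) (x j) = dist Y (e i) (e j)) ->
  exists g : Y -> X, forall y y', dist X (g y) (g y') = dist Y y y'.
Proof.
  intros Hiso. destruct (choice _ (isometry_extends_point X Y HX e He x Hiso)) as [g Hg].
  exists g. intros y y'.
  apply eq_of_approx; intros r Hr; destruct (He y' (r / 2) ltac:(lra)) as [m Hm];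
    pose proof (Hg y m); pose proof (Hg y' m);
    pose proof (dist_sym X (g y') (x m)); pose proof (dist_sym Y y' (e m)).
  - pose proof (dist_tri X (g y) (x m) (g y')). pose proof (dist_tri Y y y' (e m)). lra.
  - pose proof (dist_tri X (g y) (g y') (x m)). pose proof (dist_tri Y y (e m) y'). lra.
Qed.

Lemma isometry_image_closed (X Y : MetricSpace) (HY : complete_space Y) (g : Y -> X) :
  (forall y y', dist X (g y) (g y') = dist Y y y') ->
  forall x, (forall r, r > 0 -> exists y, dist X (g y) x < r) -> exists y, g y = x.
Proof.
  intros Hg x Hx.
  destruct (choice (fun k y => dist X (g y) x < eps k) (fun k => Hx (eps k) (eps_pos k)))
    as [ys Hys].
  destruct (HY ys) as [z Hz].
  { intros r Hr. destruct (eps_small (r / 2) ltac:(lra)) as [k Hk]. exists k.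
    intros a b Ha Hb. rewrite <- Hg.
    pose proof (dist_tri X (g (ys a)) x (g (ys b))). rewrite (dist_sym X x) in H.
    pose proof (Hys a). pose proof (Hys b).
    pose proof (eps_mono a k Ha). pose proof (eps_mono b k Hb). lra. }
  exists z. apply dist_eq0. apply eq_of_approx; intros r Hr;
    [|pose proof (dist_nonneg X (g z) x); lra].
  destruct (Hz (r / 2) ltac:(lra)) as [N HN]. destruct (eps_small (r / 2) ltac:(lra)) as [k Hk].
  set (n := Nat.max N k). specialize (HN n ltac:(lia)). pose proof (Hys n).
  pose proof (eps_mono n k ltac:(lia)).
  pose proof (dist_tri X (g z) (g (ys n)) x). rewrite Hg in H1.
  pose proof (dist_sym Y z (ys n)). lra.
Qed.

(** The sentence will say of [Y] that
    (A) every finite tuple of [Y] has, up to any [eps k], the distance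
    matrix of some tuple of [d]-points, and (B) conversely every finite
    tuple of [d]-points is realised in [Y] up to any [eps k]. *)
Section Configurations.
Variables (X : MetricSpace) (d : nat -> X).

Definition config_dist (m : nat -> nat) (i j : nat) : R := dist X (d (m i)) (d (m j)).

Definition configs_approx_X (Y : MetricSpace) : Prop :=
  forall n k (t : nat -> Y), exists m, fits Y n t (config_dist m) (eps k).

Definition realizes_X_configs (Y : MetricSpace) : Prop :=
  forall n k m, exists t : nat -> Y, fits Y n t (config_dist m) (eps k).

Lemma isometric_configs (Hd : dense_seq X d) (Y : MetricSpace) :
  isometric Y X -> configs_approx_X Y /\ realizes_X_configs Y.
Proof.
  intros [f [Hf Hs]]. split.
  - intros n k t.
    destruct (choice (fun i mi => dist X (f (t i)) (d mi) < eps k / 2)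
                (fun i => Hd (f (t i)) (eps k / 2) ltac:(pose proof (eps_pos k); lra)))
      as [m Hm].
    exists m. intros i j _ _. unfold close, config_dist. rewrite <- Hf.
    pose proof (Hm i). pose proof (Hm j).
    pose proof (dist_tri4 X (f (t i)) (d (m i)) (d (m j)) (f (t j))).
    pose proof (dist_tri4 X (d (m i)) (f (t i)) (f (t j)) (d (m j))).
    pose proof (dist_sym X (d (m j)) (f (t j))). pose proof (dist_sym X (d (m i)) (f (t i))).
    lra.
  - intros n k m. destruct (choice (fun i y => f y = d (m i)) (fun i => Hs (d (m i))))
      as [t Ht].
    exists t. intros i j _ _. unfold close, config_dist.
    rewrite <- Hf, Ht, Ht. pose proof (eps_pos k). lra.
Qed.

Section Reconstruction.
Variables (Y : MetricSpace) (e : nat -> Y).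
Hypotheses (HX : compact_space X) (Hd : dense_seq X d)
           (HY : complete_space Y) (He : dense_seq Y e)
           (HA : configs_approx_X Y) (HB : realizes_X_configs Y).

(** By (A), the first [n] terms of [e] are approximated within [eps n] by
    [d]-points; a diagonal cluster point of these approximations is an
    isometric copy of [e] inside [X]. *)
Lemma dense_seq_copy : exists x : nat -> X, forall i j, dist X (x i) (x j) = dist Y (e i) (e j).
Proof.
  destruct (choice _ (fun n => HA n n e)) as [M HM].
  set (T := fun n i => d (M n i)).
  destruct (tuple_cluster X T HX) as [x Hx]. exists x. intros i j.
  assert (Hnear : forall r, r > 0 -> exists n, dist X (T n i) (x i) < r /\
             dist X (T n j) (x j) < r /\ eps n < r /\ (i < n)%nat /\ (j < n)%nat).
  { intros r Hr. destruct (eps_small r Hr) as [k Hk].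
    destruct (Hx (S (Nat.max i j)) r Hr (Nat.max k (S (Nat.max i j)))) as [n [Hn Hclose]].
    exists n. pose proof (eps_mono n k ltac:(lia)).
    repeat split; [apply Hclose; lia|apply Hclose; lia|lra|lia|lia]. }
  apply eq_of_approx; intros r Hr;
    destruct (Hnear (r / 3) ltac:(lra)) as [n [H1 [H2 [H3 [Hi Hj]]]]];
    pose proof (HM n i j Hi Hj) as Hc; unfold close, config_dist in Hc; fold (T n i) (T n j) in Hc;
    pose proof (dist_sym X (x i) (T n i)); pose proof (dist_sym X (x j) (T n j)).
  - pose proof (dist_tri4 X (x i) (T n i) (T n j) (x j)). lra.
  - pose proof (dist_tri4 X (T n i) (x i) (x j) (T n j)). lra.
Qed.

Lemma separated_to_X r p t : separated Y r p t -> exists u : nat -> X, separated X r p u.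
Proof.
  intros Hsep. destruct (separated_slack Y r p t Hsep) as [h [Hh Hsep']].
  destruct (eps_small h Hh) as [k Hk]. destruct (HA p k t) as [m Hm].
  exists (fun i => d (m i)). intros i j Hi Hj Hij.
  specialize (Hm i j Hi Hj). specialize (Hsep' i j Hi Hj Hij).
  unfold close, config_dist in Hm. lra.
Qed.

Lemma separated_to_Y r p w : separated X r p w -> exists t : nat -> Y, separated Y r p t.
Proof.
  intros Hsep. destruct (separated_slack X r p w Hsep) as [h [Hh Hsep']].
  destruct (choice (fun i mi => dist X (w i) (d mi) < h / 4) (fun i => Hd (w i) (h / 4) ltac:(lra)))
    as [m Hm].
  destruct (eps_small (h / 2) ltac:(lra)) as [k Hk]. destruct (HB p k m) as [t Ht].
  exists t. intros i j Hi Hj Hij.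
  specialize (Ht i j Hi Hj). specialize (Hsep' i j Hi Hj Hij). unfold close, config_dist in Ht.
  pose proof (dist_tri4 X (w i) (d (m i)) (d (m j)) (w j)).
  pose proof (Hm i). pose proof (Hm j). pose proof (dist_sym X (d (m j)) (w j)). lra.
Qed.

Lemma Y_separated_bound r : r > 0 -> exists B, forall p t, separated Y r p t -> (p <= B)%nat.
Proof.
  intros Hr. destruct (separated_bound X HX r Hr) as [B HBnd].
  exists B. intros p t Hsep. destruct (separated_to_X r p t Hsep) as [u Hu]. exact (HBnd p u Hu).
Qed.

(** An isometric embedding [g : Y -> X] is onto: a point [x] outside the
    (closed) image lies at distance [r] from it; adding [x] to the image of
    a maximal [r/2]-separated family of [Y] and copying back by (B) gives
    a larger one. *)
Lemma isometry_onto (g : Y -> X) :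
  (forall y y', dist X (g y) (g y') = dist Y y y') -> forall x, exists y, g y = x.
Proof.
  intros Hg x. apply NNPP. intros Hno.
  assert (Hfar : exists r, r > 0 /\ forall y, r <= dist X (g y) x).
  { apply NNPP. intros Hnear. apply Hno. apply (isometry_image_closed X Y HY g Hg).
    intros r Hr. apply NNPP. intros Hfar. apply Hnear. exists r. split; [exact Hr|].
    intros y. apply Rnot_lt_le. intros Hlt. apply Hfar. eauto. }
  destruct Hfar as [r [Hr Hfar]].
  destruct (Y_separated_bound (r / 2) ltac:(lra)) as [B HBnd].
  destruct (nat_max (fun p => exists t, separated Y (r / 2) p t) B) as [M [[tM HtM] Hmax]].
  { exists e. intros i j Hi; lia. }
  { intros p [t Ht]. exact (HBnd p t Ht). }
  set (w := fun i => if Nat.ltb i M then g (tM i) else x).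
  assert (Hw : separated X (r / 2) (S M) w).
  { intros i j Hi Hj Hij. unfold w.
    destruct (Nat.ltb_spec i M), (Nat.ltb_spec j M).
    - rewrite Hg. now apply HtM.
    - specialize (Hfar (tM i)). lra.
    - specialize (Hfar (tM j)). rewrite dist_sym. lra.
    - lia. }
  destruct (separated_to_Y (r / 2) (S M) w Hw) as [t Ht].
  specialize (Hmax (S M) (ex_intro _ t Ht)). lia.
Qed.

Lemma reconstruct_isometric : isometric Y X.
Proof.
  destruct dense_seq_copy as [x Hx].
  destruct (isometry_extends X Y HX e He x Hx) as [g Hg].
  exists g. split; [exact Hg|exact (isometry_onto g Hg)].
Qed.

End Reconstruction.
End Configurations.

Section ScottSentence.
Variables (X : MetricSpace) (d : nat -> X).

Definition approx_axiom (n k : nat) : formula :=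
  ForallN n (OrN n (fun m => Fits n (config_dist X d m) (eps k))).

Definition realize_axiom (n k : nat) : formula :=
  AndN n (fun m => ExistsN n (Fits n (config_dist X d m) (eps k))).

Definition scott_sentence : formula :=
  FAnd (fun n => FAnd (fun k => FAnd (fun b =>
    match b with O => approx_axiom n k | _ => realize_axiom n k end))).

Lemma scott_sentence_closed : sentence scott_sentence.
Proof.
  intros v [n [k [[|b] Hv]]].
  - apply free_ForallN in Hv. destruct Hv as [Hn Hv].
    apply free_OrN in Hv. destruct Hv as [m Hv]. apply free_Fits in Hv. lia.
  - apply free_AndN in Hv. destruct Hv as [m Hv].
    apply free_ExistsN in Hv. destruct Hv as [Hn Hv]. apply free_Fits in Hv. lia.
Qed.

Lemma fits_prefix (Y : MetricSpace) n (t : nat -> Y) m e :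
  fits Y n t (config_dist X d (prefix n m O)) e <-> fits Y n t (config_dist X d m) e.
Proof.
  unfold fits, config_dist.
  split; intros H i j Hi Hj; specialize (H i j Hi Hj);
    rewrite ?(prefix_lt n m O i Hi), ?(prefix_lt n m O j Hj) in *; exact H.
Qed.

Lemma sat_scott_sentence (Y : MetricSpace) (y0 : Y) :
  models Y scott_sentence <-> configs_approx_X X d Y /\ realizes_X_configs X d Y.
Proof.
  unfold models, scott_sentence. cbn [sat]. split.
  - intros H. split.
    + intros n k t. specialize (H n k O). unfold approx_axiom in H.
      rewrite (sat_ForallN Y y0) in H. specialize (H t). rewrite sat_OrN in H.
      destruct H as [m H]. rewrite sat_Fits in H. now exists (prefix n m O).
    + intros n k m. specialize (H n k 1%nat). cbv iota in H. unfold realize_axiom in H.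
      rewrite sat_AndN in H. specialize (H m). rewrite (sat_ExistsN Y y0) in H.
      destruct H as [t H]. rewrite sat_Fits, fits_prefix in H. now exists t.
  - intros [HA HB] n k [|b].
    + unfold approx_axiom. rewrite (sat_ForallN Y y0). intros t. rewrite sat_OrN.
      destruct (HA n k t) as [m Hm]. exists m. now rewrite sat_Fits, fits_prefix.
    + unfold realize_axiom. rewrite sat_AndN. intros m. rewrite (sat_ExistsN Y y0).
      destruct (HB n k (prefix n m O)) as [t Ht]. exists t. now rewrite sat_Fits.
Qed.

(** A model of the sentence is nonempty: it realises a [1]-tuple. *)
Lemma scott_sentence_inhabited (Y : MetricSpace) : models Y scott_sentence -> inhabited Y.
Proof.
  intros H. specialize (H 1%nat O 1%nat). cbv iota in H. unfold realize_axiom in H.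
  rewrite sat_AndN in H. destruct (H (fun _ => O)) as [a _]. exact (inhabits a).
Qed.

End ScottSentence.

Lemma nonempty_compact_sentence (X : MetricSpace) (HX : compact_space X) (x0 : X) :
  exists phi : formula, sentence phi /\
    forall Y : MetricSpace, polish Y -> (models Y phi <-> isometric Y X).
Proof.
  destruct (compact_dense_seq X HX x0) as [d Hd].
  exists (scott_sentence X d). split; [apply scott_sentence_closed|].
  intros Y [HYc HYs]. split.
  - intros Hm. destruct (scott_sentence_inhabited X d Y Hm) as [y0].
    destruct (separable_dense_seq Y y0 HYs) as [e He].
    apply (sat_scott_sentence X d Y y0) in Hm. destruct Hm as [HA HB].
    exact (reconstruct_isometric X d Y e HX Hd HYc He HA HB).
  - intros Hiso. pose proof (isometric_configs X d Hd Y Hiso) as Hconfigs.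
    destruct Hiso as [f [_ Hs]]. destruct (Hs x0) as [y0 _].
    now apply (sat_scott_sentence X d Y y0).
Qed.

Lemma empty_space_sentence (X : MetricSpace) : ~ inhabited X ->
  exists phi : formula, sentence phi /\
    forall Y : MetricSpace, models Y phi <-> isometric Y X.
Proof.
  intros HXe. exists (FForall 0 (FNot (FEq 0 0))). split.
  - intros v [Hv [H|H]]; contradiction.
  - intros Y. unfold models; cbn [sat update Nat.eqb]. split.
    + intros Hempty. exists (fun y => False_rect _ (Hempty y eq_refl)). split.
      * intros a. exfalso. exact (Hempty a eq_refl).
      * intros x. exfalso. exact (HXe (inhabits x)).
    + intros [f _] a _. exact (HXe (inhabits (f a))).
Qed.

Theorem mainTheorem5 :
  forall X : MetricSpace, compact_space X ->
  exists phi : formula, sentence phi /\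
    forall Y : MetricSpace, polish Y -> (models Y phi <-> isometric Y X).
Proof.
  intros X HX. destruct (classic (inhabited X)) as [[x0]|HXe].
  - exact (nonempty_compact_sentence X HX x0).
  - destruct (empty_space_sentence X HXe) as [phi [Hphi Hiff]].
    exists phi. split; [exact Hphi|]. intros Y _. apply Hiff.
Qed.
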